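(* Let $(\mathbf{W},\mathbf{b},\boldsymbol\rho)$ be a radial neural network with widths vector $\mathbf{n}=(n_0,\dots,n_L)$, weights $W_i\in\mathbb{R}^{n_i\times n_{i-1}}$, biases $b_i\in\mathbb{R}^{n_i}$ and radial rescaling activations $\rho_i=h_i^{(n_i)}$. Let $(\mathbf{W}^{\rm red},\mathbf{b}^{\rm red})$ be the weights and biases produced by the QR compression algorithm described below (for any choice of the complete QR decompositions in it). Then the feedforward function of $(\mathbf{W},\mathbf{b},\boldsymbol\rho)$ coincides with the feedforward function of the radial neural network $(\mathbf{W}^{\rm red},\mathbf{b}^{\rm red},\boldsymbol\rho^{\rm red})$ with widths vector $\mathbf{n}^{\rm red}$, where $\rho^{\rm red}_i=h_i^{(n^{\rm red}_i)}$ is the restriction of $\rho_i$ to $\mathbb{R}^{n^{\rm red}_i}\subseteq\mathbb{R}^{n_i}$.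
   Context: For $h:\mathbb{R}\to\mathbb{R}$ piecewise differentiable, $h^{(n)}:\mathbb{R}^n\to\mathbb{R}^n$ is $h^{(n)}(v)=h(|v|)v/|v|$ for $v\ne0$ and $h^{(n)}(0)=0$ (a radial rescaling function). A radial neural network with widths $(n_0,\dots,n_L)$ consists of $W_i\in\mathbb{R}^{n_i\times n_{i-1}}$, $b_i\in\mathbb{R}^{n_i}$ and radial rescaling functions $\rho_i$ on $\mathbb{R}^{n_i}$ ($i=1,\dots,L$); its feedforward function is $F=F_L$ with $F_0=\mathrm{id}_{\mathbb{R}^{n_0}}$, $F_i(x)=\rho_i(W_iF_{i-1}(x)+b_i)$. Reduced widths: $n^{\rm red}_0=n_0$, $n^{\rm red}_i=\min(n_i,n^{\rm red}_{i-1}+1)$ for $i=1,\dots,L-1$, $n^{\rm red}_L=n_L$. $\mathbb{R}^{k}$ is regarded as a subspace of $\mathbb{R}^{n}$ ($k\le n$) via the first $k$ coordinates; $\mathrm{Inc}_i\in\mathbb{R}^{n_i\times n^{\rm red}_i}$ is the matrix with ones on the main diagonal and zeros elsewhere. QR compression algorithm: set $A_1=[\,b_1\ W_1\,]\in\mathbb{R}^{n_1\times(n_0+1)}$. For $i=1,\dots,L-1$: compute a complete QR decomposition $A_i=Q_i\,\mathrm{Inc}_i\,R_i$ with $Q_i\in O(n_i)$ and $R_i$ upper triangular of size $n^{\rm red}_i\times(1+n^{\rm red}_{i-1})$; set $b^{\rm red}_i$ to be the first column of $R_i$ and $W^{\rm red}_i$ the remaining columns; set $A_{i+1}=[\,b_{i+1}\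 \ W_{i+1}Q_i\mathrm{Inc}_i\,]\in\mathbb{R}^{n_{i+1}\times(n^{\rm red}_i+1)}$. Finally $b^{\rm red}_L$ is the first column of $A_L$ and $W^{\rm red}_L$ the remaining columns. The algorithm also outputs $\mathbf{Q}=(Q_1,\dots,Q_{L-1})$. *)

From HB Require Import structures.
From mathcomp Require Import all_boot all_order all_algebra.
From mathcomp Require Import all_classical all_reals all_analysis.
Set Implicit Arguments. Unset Strict Implicit. Unset Printing Implicit Defensive.
Import Order.TTheory GRing.Theory Num.Theory.
Local Open Scope ring_scope.

Section RadialNets.
Variable R : realType.

Definition enorm n (v : 'cV[R]_n) : R := Num.sqrt (\sum_(j < n) v j 0 ^+ 2).

Definition piecewise_differentiable (h : R -> R) : Prop :=
  exists s : seq R, forall x, x \notin s -> derivable h x 1.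

Definition radial n (h : R -> R) (v : 'cV[R]_n) : 'cV[R]_n :=
  if v == 0 then 0 else (h (enorm v) / enorm v) *: v.

(* Feedforward function of a radial network with widths m (layers 1..L,
   the layer-i data being W i : R^{m i x m (i-1)}, b i, activation h i).
   ff m W b h k = F_k. *)
Fixpoint ff (m : nat -> nat) (W : forall i, 'M[R]_(m i, m i.-1))
  (b : forall i, 'cV[R]_(m i)) (h : nat -> R -> R) (k : nat) :
  'cV[R]_(m 0) -> 'cV[R]_(m k) :=
  match k with
  | 0 => fun x => x
  | k'.+1 => fun x => radial (h k'.+1) (W k'.+1 *m ff W b h k' x + b k'.+1)
  end.

Fixpoint nred_aux (n : nat -> nat) (k : nat) : nat :=
  match k with
  | 0 => n 0%N
  | k'.+1 => minn (n k'.+1) (nred_aux n k').+1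
  end.

Definition nred (n : nat -> nat) (L : nat) (k : nat) : nat :=
  match k with
  | 0 => n 0%N
  | _ => if k == L then n L else nred_aux n k
  end.

Definition Inc (p q : nat) : 'M[R]_(p, q) := \matrix_(r, c) ((r : nat) == c)%:R.

Definition orthogonal_mx n (Q : 'M[R]_n) : Prop := Q^T *m Q = 1%:M.

Definition upper_triangular p q (M : 'M[R]_(p, q)) : Prop :=
  forall (r : 'I_p) (c : 'I_q), (c < r)%N -> M r c = 0.

Section QR.
Variables (n : nat -> nat) (L : nat).
Variables (W : forall i, 'M[R]_(n i, n i.-1)) (b : forall i, 'cV[R]_(n i)).
Variable Q : forall i, 'M[R]_(n i).              (* Q_1, ..., Q_{L-1} *)
Variable Rm : forall i, 'M[R]_(nred n L i, 1 + nred n L i.-1). (* R_1..R_{L-1} *)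

Definition QInc (i : nat) : 'M[R]_(n i, nred n L i) :=
  match i return 'M[R]_(n i, nred n L i) with
  | 0 => 1%:M
  | i'.+1 => Q i'.+1 *m Inc (n i'.+1) (nred n L i'.+1)
  end.

Definition Amx (i : nat) : 'M[R]_(n i, 1 + nred n L i.-1) :=
  row_mx (b i) (W i *m QInc i.-1).

(* output of the QR compression: b^red_i, W^red_i are the first column /
   remaining columns of R_i for i < L, and of A_L for i = L (where
   n^red_L = n_L; conform_mx only performs this identity cast). *)
Definition Wred (i : nat) : 'M[R]_(nred n L i, nred n L i.-1) :=
  if i == L then conform_mx (rsubmx (Rm i)) (rsubmx (Amx i))
  else rsubmx (Rm i).

Definition bred (i : nat) : 'cV[R]_(nred n L i) :=
  if i == L then conform_mx (lsubmx (Rm i)) (lsubmx (Amx i))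
  else lsubmx (Rm i).

Definition QR_compression_valid : Prop :=
  forall i, (0 < i < L)%N ->
    [/\ orthogonal_mx (Q i), upper_triangular (Rm i) &
        Amx i = Q i *m Inc (n i) (nred n L i) *m Rm i].

End QR.

Lemma nredL (n : nat -> nat) (L : nat) : nred n L L = n L.
Proof. by case: L => [|L] //=; rewrite eqxx. Qed.

End RadialNets.

From HB Require Import structures.
From mathcomp Require Import all_boot all_order all_algebra.
From mathcomp Require Import all_classical all_reals all_analysis.
Set Implicit Arguments. Unset Strict Implicit. Unset Printing Implicit Defensive.
Import Order.TTheory GRing.Theory Num.Theory.
Local Open Scope ring_scope.

(* A radial rescaling only sees the norm of its argument, so it commutes with
   every isometric embedding M (i.e. M^T M = 1), in particular with Q_i Inc_i.
   Since A_i [1; v] = b_i + W_i Q_{i-1} Inc_{i-1} v and A_i = Q_i Inc_i R_i,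
   induction on the layers gives F_i = Q_i Inc_i F_i^red for i < L; at the last
   layer W^red_L, b^red_L are read off A_L itself, so the outputs agree. *)

Section RadialRescaling.
Variable R : realType.

Lemma enormE p (v : 'cV[R]_p) : enorm v = Num.sqrt ((v^T *m v) 0 0).
Proof.
rewrite /enorm mxE; congr Num.sqrt; apply: eq_bigr => j _.
by rewrite mxE expr2.
Qed.

Lemma enorm_mulmx_isometry p q (M : 'M[R]_(p, q)) (v : 'cV[R]_q) :
  M^T *m M = 1%:M -> enorm (M *m v) = enorm v.
Proof. by move=> isoM; rewrite !enormE trmx_mul mulmxA -(mulmxA v^T) isoM mulmx1. Qed.

Lemma radial_mulmx_isometry p q (M : 'M[R]_(p, q)) h (v : 'cV[R]_q) :
  M^T *m M = 1%:M -> radial h (M *m v) = M *m radial h v.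
Proof.
move=> isoM; rewrite /radial enorm_mulmx_isometry //.
have [->|v0] := eqVneq v 0; first by rewrite !mulmx0 eqxx.
have Mv0 : M *m v != 0.
  by apply: contra_neq v0 => Mv0; rewrite -[v]mul1mx -isoM -mulmxA Mv0 mulmx0.
by rewrite (negbTE Mv0) scalemxAr.
Qed.

Lemma Inc_isometry p q : (q <= p)%N -> (Inc R p q)^T *m Inc R p q = 1%:M.
Proof.
move=> le_qp; apply/matrixP => r c; rewrite !mxE (bigD1 (widen_ord le_qp r)) //=.
rewrite big1 ?addr0 => [|k /eqP neq_kr]; first by rewrite !mxE eqxx mul1r.
rewrite !mxE; case: eqP => [eq_kr|]; last by rewrite mul0r.
by case: neq_kr; apply: val_inj.
Qed.

Lemma castmx_radial_conform p p' q (e : p' = p) h (B : 'M[R]_(p', q))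
    (C : 'cV[R]_p') (A : 'M[R]_(p, q)) (c : 'cV[R]_p) (v : 'cV[R]_q) :
  radial h (A *m v + c) =
  castmx (e, erefl 1%N) (radial h (conform_mx B A *m v + conform_mx C c)).
Proof. by case: p / e A c => A c; rewrite !conform_mx_id castmx_id. Qed.

End RadialRescaling.

Section QRCompression.
Variables (R : realType) (n : nat -> nat) (L : nat).
Variables (W : forall i, 'M[R]_(n i, n i.-1)) (b : forall i, 'cV[R]_(n i)).
Variable h : nat -> R -> R.
Variable Q : forall i, 'M[R]_(n i).
Variable Rm : forall i, 'M[R]_(nred n L i, 1 + nred n L i.-1).
Hypothesis QR : QR_compression_valid W b Q Rm.

Local Notation Wr := (Wred W b Q Rm).
Local Notation br := (bred W b Q Rm).

Lemma QInc_isometry i : (i < L)%N -> (QInc L Q i)^T *m QInc L Q i = 1%:M.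
Proof.
case: i => [|i] ltiL; first by rewrite trmx1 mulmx1.
have [orthQ _ _] := QR (i := i.+1) ltiL.
have le_red : (nred n L i.+1 <= n i.+1)%N.
  by rewrite /= ifN ?geq_minl // neq_ltn ltiL.
by rewrite trmx_mul mulmxA -(mulmxA _ (Q _)^T) orthQ mulmx1 Inc_isometry.
Qed.

Lemma preactivation_QR i (v : 'cV[R]_(nred n L i.-1)) : (0 < i < L)%N ->
  W i *m (QInc L Q i.-1 *m v) + b i = QInc L Q i *m (Wr i *m v + br i).
Proof.
case: i v => // i v ltiL; have [_ _ QR_A] := QR (i := i.+1) ltiL.
have Amx_col :
    Amx L W b Q i.+1 *m col_mx 1%:M v = W i.+1 *m (QInc L Q i *m v) + b i.+1.
  by rewrite mul_row_col mulmx1 mulmxA addrC.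
have /negbTE neq_iL : i.+1 != L by rewrite neq_ltn (ltiL : (i.+1 < L)%N).
rewrite -Amx_col QR_A /Wred /bred neq_iL -!mulmxA -{1}(hsubmxK (Rm i.+1)).
by rewrite mul_row_col mulmx1 addrC.
Qed.

Lemma Wred_last : Wr L = conform_mx (rsubmx (Rm L)) (W L *m QInc L Q L.-1).
Proof. by rewrite /Wred eqxx row_mxKr. Qed.

Lemma bred_last : br L = conform_mx (lsubmx (Rm L)) (b L).
Proof. by rewrite /bred eqxx row_mxKl. Qed.

Lemma ff_QR_compression i (x : 'cV[R]_(n 0%N)) : (i < L)%N ->
  ff W b h i x = QInc L Q i *m ff Wr br h i x.
Proof.
elim: i => [|i IH] ltiL; first by rewrite mul1mx.
rewrite [ff W b h i.+1 x]/= [ff W b h i x](IH (ltnW ltiL)) preactivation_QR //.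
by rewrite radial_mulmx_isometry ?QInc_isometry.
Qed.

End QRCompression.

Theorem theorem3 (R : realType) (n : nat -> nat) (L : nat)
  (W : forall i, 'M[R]_(n i, n i.-1)) (b : forall i, 'cV[R]_(n i))
  (h : nat -> R -> R)
  (Q : forall i, 'M[R]_(n i))
  (Rm : forall i, 'M[R]_(nred n L i, 1 + nred n L i.-1)) :
  (forall i, (0 < i <= L)%N -> piecewise_differentiable (h i)) ->
  QR_compression_valid W b Q Rm ->
  forall x : 'cV[R]_(n 0%N),
    ff W b h L x =
    castmx (nredL n L, erefl 1%N)
      (ff (Wred W b Q Rm) (bred W b Q Rm) h L x).
Proof.
(* The identity holds for arbitrary activations h. *)
move=> _; case: L Rm => [|l] Rm QR x.
  by rewrite (eq_castmx _ (erefl, erefl)) castmx_id.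
rewrite /= (ff_QR_compression h QR) // mulmxA Wred_last bred_last.
exact: castmx_radial_conform.
Qed.
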